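(* For every ordinal $\alpha$: if $y\in E_{\alpha+1}$ and $x\in y$, then $x\in E_\alpha$.
   Context: Let $\mathrm{fun}(f,a,b)$ be the bounded formula expressing that $f$ is a function from $a$ to $b$: $f\subseteq a\times b\wedge(\forall y\in a)(\exists z\in b)((y,z)\in f)\wedge(\forall y\in a)(\forall z_1,z_2\in b)[((y,z_1)\in f\wedge(y,z_2)\in f)\to z_1=z_2]$, with Kuratowski pairs $(u,v)=\{\{u,v\},\{u\}\}$. The exponentiation hierarchy: $E_0=\emptyset$; $E_1=\{\emptyset\}$; $E_{\alpha+2}=\{X: X\text{ definable over }\langle E_{\alpha+1},\in\rangle\text{ with parameters}\}\cup\{f:\mathrm{fun}(f,a,b)\text{ for some }a,b\in E_\alpha\}$; $E_\lambda=\bigcup_{\beta<\lambda}E_\beta$ for limit $\lambda$; $E_{\lambda+1}=\{X: X\text{ definable over }\langle E_\lambda,\in\rangle\text{ with parameters}\}$ for limit $\lambda$. *)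

(* Sets are modelled by Aczel's type-theoretic universe of
   well-founded trees (with extensional equality [Veq] and membership [mem]);
   ordinals are represented as points of well-ordered types. *)
From Stdlib Require Import List ClassicalEpsilon.
Import ListNotations.

Inductive V : Type := sup : forall A : Type, (A -> V) -> V.

Definition idx (x : V) : Type := match x with sup A _ => A end.
Definition elt (x : V) : idx x -> V := match x with sup _ f => f end.

Fixpoint Veq (x y : V) {struct x} : Prop :=
  match x, y with
  | sup A f, sup B g =>
      (forall a : A, exists b : B, Veq (f a) (g b)) /\
      (forall b : B, exists a : A, Veq (f a) (g b))
  end.

Definition mem (x y : V) : Prop := exists b : idx y, Veq x (elt y b).

Definition subsetV (x y : V) : Prop := forall z, mem z x -> mem z y.

Definition emptyV : V := sup Empty_set (fun e => match e with end).
Definition singV (u : V) : V := sup unit (fun _ => u).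
Definition upairV (u v : V) : V := sup bool (fun b => if b then u else v).
Definition kpair (u v : V) : V := upairV (upairV u v) (singV u).
Definition prodV (a b : V) : V :=
  sup (idx a * idx b) (fun p => kpair (elt a (fst p)) (elt b (snd p))).
Definition unionV2 (x y : V) : V :=
  sup (idx x + idx y) (fun s => match s with inl i => elt x i | inr j => elt y j end).
Definition subV (X : V) (P : idx X -> Prop) : V :=
  sup {c : idx X | P c} (fun s => elt X (proj1_sig s)).

Definition isFun (f a b : V) : Prop :=
  subsetV f (prodV a b) /\
  (forall y, mem y a -> exists z, mem z b /\ mem (kpair y z) f) /\
  (forall y, mem y a -> forall z1 z2, mem z1 b -> mem z2 b ->
     mem (kpair y z1) f -> mem (kpair y z2) f -> Veq z1 z2).

(* { f : fun(f,a,b) for some a, b ∈ S }  (realised inside P(a × b)) *)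
Definition FunSet (S : V) : V :=
  sup {i : idx S & {j : idx S &
        {P : idx (prodV (elt S i) (elt S j)) -> Prop |
           isFun (subV (prodV (elt S i) (elt S j)) P) (elt S i) (elt S j)}}}
      (fun s => subV (prodV (elt S (projT1 s)) (elt S (projT1 (projT2 s))))
                     (proj1_sig (projT2 (projT2 s)))).

(* formulas of the language {∈, =}, de Bruijn variables *)
Inductive form : Set :=
| FMem : nat -> nat -> form
| FEq  : nat -> nat -> form
| FFalse : form
| FNot : form -> form
| FAnd : form -> form -> form
| FOr  : form -> form -> form
| FImp : form -> form -> form
| FEx  : form -> form
| FAll : form -> form.

(* satisfaction in <M, ∈>; variables are assigned elements of M (by index);
   unassigned variables make atomic formulas false *)
Fixpoint sat (M : V) (e : list (idx M)) (p : form) {struct p} : Prop :=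
  match p with
  | FMem i j => match nth_error e i, nth_error e j with
                | Some a, Some b => mem (elt M a) (elt M b)
                | _, _ => False end
  | FEq i j => match nth_error e i, nth_error e j with
               | Some a, Some b => Veq (elt M a) (elt M b)
               | _, _ => False end
  | FFalse => False
  | FNot q => ~ sat M e q
  | FAnd q r => sat M e q /\ sat M e r
  | FOr q r => sat M e q \/ sat M e r
  | FImp q r => sat M e q -> sat M e r
  | FEx q => exists a : idx M, sat M (a :: e) q
  | FAll q => forall a : idx M, sat M (a :: e) q
  end.

Definition defsub (M : V) (phi : form) (ps : list (idx M)) : V :=
  subV M (fun a => sat M (a :: ps) phi).

Definition Def (M : V) : V :=
  sup (form * list (idx M)) (fun q => defsub M (fst q) (snd q)).

Record WO : Type := {
  wcar :> Type;
  wlt : wcar -> wcar -> Prop;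
  wlt_wf : well_founded wlt;
  wlt_trans : forall x y z, wlt x y -> wlt y z -> wlt x z;
  wlt_total : forall x y, wlt x y \/ x = y \/ wlt y x
}.

Definition IsSucc (W : WO) (a b : W) : Prop :=
  wlt W a b /\ forall c, wlt W a c -> ~ wlt W c b.

Section Hier.
Variable W : WO.

Definition Estep (g : W) (rec : forall b : W, wlt W b g -> V) : V :=
  match excluded_middle_informative (exists b, IsSucc W b g) with
  | left H =>
      let (b, Hb) := constructive_indefinite_description _ H in
      let Eb := rec b (proj1 Hb) in
      match excluded_middle_informative (exists d, IsSucc W d b) with
      | left H' =>
          let (d, Hd) := constructive_indefinite_description _ H' in
          (* g = d + 2 :  Def(E_{d+1}) ∪ {f | fun(f,a,b), a,b ∈ E_d} *)
          unionV2 (Def Eb)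
                  (FunSet (rec d (wlt_trans W _ _ _ (proj1 Hd) (proj1 Hb))))
      | right _ =>
          match excluded_middle_informative (exists d, wlt W d b) with
          | left _ => Def Eb            (* g = λ + 1, λ limit *)
          | right _ => singV emptyV     (* g = 1 *)
          end
      end
  | right _ =>
      (* g = 0 or g limit : union of the earlier levels *)
      sup {b : W & {h : wlt W b g & idx (rec b h)}}
          (fun s => elt (rec (projT1 s) (projT1 (projT2 s))) (projT2 (projT2 s)))
  end.

Definition E : W -> V := Fix (wlt_wf W) (fun _ => V) Estep.
End Hier.

(* By well-founded induction on g one proves simultaneously that E is
   monotone (E_h ⊆ E_g for h < g) and that every element of a member of E_g
   already lies in some E_h with h < g.  The only non-trivial case is
   g = d + 2 and a member f ⊆ a × b with a, b ∈ E_d: an element of f is a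
   Kuratowski pair (u,v) with u, v in some common level E_m, m < d; then
   {u,v} and {u} are definable over E_m, hence lie in E_{m+1} ⊆ E_d, so
   (u,v) is definable over E_d and lies in E_{d+1}.  The theorem follows
   because every level below α + 1 is contained in E_α. *)
From Stdlib Require Import List ClassicalEpsilon Classical FunctionalExtensionality.
Import ListNotations.

Lemma Veq_refl x : Veq x x.
Proof. induction x as [A f IH]; simpl; split; intro a; exists a; apply IH. Qed.

Lemma Veq_sym x y : Veq x y -> Veq y x.
Proof.
  revert y; induction x as [A f IH]; intros [B g]; simpl; intros [H1 H2]; split.
  - intro b. destruct (H2 b) as [a Ha]. exists a. apply IH, Ha.
  - intro a. destruct (H1 a) as [b Hb]. exists b. apply IH, Hb.
Qed.

Lemma Veq_trans x y z : Veq x y -> Veq y z -> Veq x z.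
Proof.
  revert y z; induction x as [A f IH]; intros [B g] [C h]; simpl;
    intros [H1 H2] [K1 K2]; split.
  - intro a. destruct (H1 a) as [b Hb]. destruct (K1 b) as [c Hc].
    exists c. eapply IH; eauto.
  - intro c. destruct (K2 c) as [b Hb]. destruct (H2 b) as [a Ha].
    exists a. eapply IH; eauto.
Qed.

Lemma mem_Veq_l x x' y : Veq x x' -> mem x y -> mem x' y.
Proof.
  intros H [b Hb]. exists b. eapply Veq_trans; [apply Veq_sym, H | exact Hb].
Qed.

Lemma mem_Veq_r x y y' : Veq y y' -> mem x y -> mem x y'.
Proof.
  destruct y as [A f], y' as [B g]; intros [H _] [a Ha].
  destruct (H a) as [b Hb]. exists b. eapply Veq_trans; eauto.
Qed.

Lemma Veq_ext x y :
  (forall z, mem z x -> mem z y) -> (forall z, mem z y -> mem z x) -> Veq x y.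
Proof.
  destruct x as [A f], y as [B g]; simpl; intros H1 H2; split.
  - intro a. destruct (H1 (f a)) as [b Hb]; [exists a; apply Veq_refl|].
    exists b; exact Hb.
  - intro b. destruct (H2 (g b)) as [a Ha]; [exists b; apply Veq_refl|].
    exists a; apply Veq_sym, Ha.
Qed.

Lemma mem_elt y i : mem (elt y i) y.
Proof. exists i. apply Veq_refl. Qed.

Lemma singV_Veq_upairV u : Veq (singV u) (upairV u u).
Proof.
  apply Veq_ext.
  - intros z [[] Hz]. exists true; exact Hz.
  - intros z [[|] Hz]; exists tt; exact Hz.
Qed.

Lemma mem_FunSet_kpair S f x : mem f (FunSet S) -> mem x f ->
  exists i j (p : idx (elt S i)) (q : idx (elt S j)),
    Veq x (kpair (elt (elt S i) p) (elt (elt S j) q)).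
Proof.
  intros [[i [j [P HP]]] Hf] Hx.
  destruct (mem_Veq_r _ _ _ Hf Hx) as [[[p q] Hpq] Hxk].
  exists i, j, p, q. exact Hxk.
Qed.

Lemma upairV_mem_Def M p q : mem p M -> mem q M -> mem (upairV p q) (Def M).
Proof.
  intros [ip Hp] [iq Hq].
  exists (FOr (FEq 0 1) (FEq 0 2), [ip; iq]).
  change (Veq (upairV p q) (defsub M (FOr (FEq 0 1) (FEq 0 2)) [ip; iq])).
  apply Veq_ext.
  - intros z [[|] Hz]; simpl in Hz.
    + unshelve eexists; [exists ip; left; apply Veq_refl|].
      eapply Veq_trans; eauto.
    + unshelve eexists; [exists iq; right; apply Veq_refl|].
      eapply Veq_trans; eauto.
  - intros z [[a [Ha | Ha]] Hz]; simpl in *.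
    + exists true. eapply Veq_trans; [exact Hz|].
      eapply Veq_trans; [exact Ha | apply Veq_sym, Hp].
    + exists false. eapply Veq_trans; [exact Hz|].
      eapply Veq_trans; [exact Ha | apply Veq_sym, Hq].
Qed.

Lemma singV_mem_Def M u : mem u M -> mem (singV u) (Def M).
Proof.
  intro Hu. eapply mem_Veq_l; [apply Veq_sym, singV_Veq_upairV|].
  apply upairV_mem_Def; exact Hu.
Qed.

Lemma mem_Def_of_subset M x : subsetV x M -> mem x M -> mem x (Def M).
Proof.
  intros HS [ix Hx].
  exists (FMem 0 1, [ix]). change (Veq x (defsub M (FMem 0 1) [ix])).
  apply Veq_ext.
  - intros z Hz. destruct (HS z Hz) as [a Ha].
    unshelve eexists; simpl; [exists a|exact Ha].
    eapply mem_Veq_r; [exact Hx|]. eapply mem_Veq_l; [exact Ha | exact Hz].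
  - intros z [[a Ha] Hz]; simpl in *.
    eapply mem_Veq_r; [apply Veq_sym, Hx|].
    eapply mem_Veq_l; [apply Veq_sym, Hz | exact Ha].
Qed.

Lemma mem_of_mem_Def M y x : mem y (Def M) -> mem x y -> mem x M.
Proof.
  intros [[phi ps] Hy] Hx.
  destruct (mem_Veq_r _ _ _ Hy Hx) as [[a Ha] H]. exists a. exact H.
Qed.

Section Hierarchy.
Variable W : WO.
Notation lt := (wlt W).

Lemma le_of_lt_succ a s h : IsSucc W a s -> lt h s -> h = a \/ lt h a.
Proof.
  intros [_ Hs] Hh. destruct (wlt_total W h a) as [H|[H|H]]; auto.
  exfalso. exact (Hs h H Hh).
Qed.

Lemma succ_unique a b s : IsSucc W a s -> IsSucc W b s -> a = b.
Proof.
  intros Ha Hb. destruct (le_of_lt_succ _ _ _ Ha (proj1 Hb)) as [|H]; auto.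
  exfalso. exact (proj2 Hb a H (proj1 Ha)).
Qed.

Lemma exists_succ_le m d : lt m d -> exists s, IsSucc W m s /\ (s = d \/ lt s d).
Proof.
  revert d. refine (well_founded_ind (wlt_wf W) _ _). intros d IH Hmd.
  destruct (classic (exists c, lt m c /\ lt c d)) as [[c [Hmc Hcd]] | Hn].
  - destruct (IH c Hcd Hmc) as [s [Hs Hsc]]. exists s. split; [exact Hs|].
    right. destruct Hsc as [-> | Hsc]; [exact Hcd | eapply wlt_trans; eauto].
  - exists d. repeat split; auto. intros c H1 H2. apply Hn; eauto.
Qed.

Lemma E_unfold g : E W g = Estep W g (fun b _ => E W b).
Proof.
  unfold E. apply (Fix_eq (wlt_wf W) (fun _ => V) (Estep W)).
  intros x f h Hfh.
  replace h with f; [reflexivity|].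
  apply functional_extensionality_dep; intro y.
  apply functional_extensionality_dep; intro p. apply Hfh.
Qed.

Lemma E_minimal_empty m w : ~ (exists d, lt d m) -> ~ mem w (E W m).
Proof.
  intros Hm Hw. rewrite E_unfold in Hw. unfold Estep in Hw.
  destruct excluded_middle_informative as [H | H].
  - clear Hw. destruct H as [b [Hb _]]. apply Hm; eauto.
  - destruct Hw as [[b [h _]] _]. apply Hm; eauto.
Qed.

Lemma mem_E_succ_of_Def m s z :
  IsSucc W m s -> mem z (Def (E W m)) -> mem z (E W s).
Proof.
  intros Hms Hz. rewrite E_unfold. unfold Estep.
  destruct excluded_middle_informative as [H|H]; [|exfalso; apply H; eauto].
  destruct (constructive_indefinite_description _ H) as [b Hb].
  replace b with m by (eapply succ_unique; eauto); cbv beta.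
  destruct excluded_middle_informative as [H'|H'].
  - destruct (constructive_indefinite_description _ H') as [d Hd].
    destruct Hz as [i Hi]. exists (inl i). exact Hi.
  - destruct excluded_middle_informative as [|H'']; [exact Hz|].
    (* E_1 = {∅}, and ∅ is the only subset of E_0 = ∅ *)
    exists tt. apply Veq_ext.
    + intros w Hw. exfalso. eapply E_minimal_empty; [exact H''|].
      eapply mem_of_mem_Def; eauto.
    + intros w [[] _].
Qed.

Lemma mem_E_limit g h y :
  ~ (exists b, IsSucc W b g) -> lt h g -> mem y (E W h) -> mem y (E W g).
Proof.
  intros Hn Hh [i Hi]. rewrite E_unfold. unfold Estep.
  destruct excluded_middle_informative; [contradiction|].
  exists (existT _ h (existT _ Hh i)). exact Hi.
Qed.

Lemma mem_E_cases g y : mem y (E W g) ->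
  (exists b, lt b g /\ mem y (E W b)) \/
  (exists b, IsSucc W b g /\ mem y (Def (E W b))) \/
  (exists b d, IsSucc W b g /\ IsSucc W d b /\ mem y (FunSet (E W d))) \/
  Veq y emptyV.
Proof.
  intro Hy. rewrite E_unfold in Hy. unfold Estep in Hy.
  destruct excluded_middle_informative as [H|H].
  - destruct (constructive_indefinite_description _ H) as [b Hb]. cbv beta in Hy.
    destruct excluded_middle_informative as [H'|H'].
    + destruct (constructive_indefinite_description _ H') as [d Hd].
      destruct Hy as [[i|j] Hi].
      * right; left. exists b. split; [exact Hb|]. exists i; exact Hi.
      * right; right; left. exists b, d. do 2 (split; [assumption|]).
        exists j; exact Hi.
    + destruct excluded_middle_informative.
      * right; left. exists b. auto.
      * right; right; right. destruct Hy as [[] Hi]. exact Hi.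
  - left. destruct Hy as [[b [h i]] Hi]. exists b. split; [exact h|].
    exists i. exact Hi.
Qed.

Definition E_mono_at (g : W) : Prop :=
  forall h y, lt h g -> mem y (E W h) -> mem y (E W g).

Definition E_lowers_at (g : W) : Prop :=
  forall x y, mem y (E W g) -> mem x y -> exists h, lt h g /\ mem x (E W h).

Lemma mem_E_le b h y :
  E_mono_at b -> h = b \/ lt h b -> mem y (E W h) -> mem y (E W b).
Proof. intros Hb [->|Hh] Hy; [exact Hy | exact (Hb h y Hh Hy)]. Qed.

Lemma E_transitive_at b x y :
  E_lowers_at b -> E_mono_at b -> mem y (E W b) -> mem x y -> mem x (E W b).
Proof.
  intros Hl Hm Hy Hx. destruct (Hl x y Hy Hx) as [h [Hh Hxh]]. exact (Hm h x Hh Hxh).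
Qed.

Lemma E_mono_step g :
  (forall b, lt b g -> E_lowers_at b /\ E_mono_at b) -> E_mono_at g.
Proof.
  intros IH h y Hh Hy.
  destruct (classic (exists b, IsSucc W b g)) as [[b Hb] | Hn].
  - destruct (IH b (proj1 Hb)) as [Hlb Hmb].
    apply (mem_E_succ_of_Def b); [exact Hb|].
    assert (Hyb : mem y (E W b))
      by exact (mem_E_le b h y Hmb (le_of_lt_succ _ _ _ Hb Hh) Hy).
    apply mem_Def_of_subset; [|exact Hyb].
    intros z Hz. exact (E_transitive_at b z y Hlb Hmb Hyb Hz).
  - exact (mem_E_limit g h y Hn Hh Hy).
Qed.

Lemma mem_E_common m1 m2 u v : E_mono_at m1 -> E_mono_at m2 ->
  mem u (E W m1) -> mem v (E W m2) ->
  exists m, (m = m1 \/ m = m2) /\ mem u (E W m) /\ mem v (E W m).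
Proof.
  intros H1 H2 Hu Hv. destruct (wlt_total W m1 m2) as [H|[<-|H]].
  - exists m2. repeat split; auto. exact (H2 m1 u H Hu).
  - exists m1. auto.
  - exists m1. repeat split; auto. exact (H1 m2 v H Hv).
Qed.

Lemma kpair_mem_E_succ d s u v m1 m2 :
  IsSucc W d s -> (forall b, lt b s -> E_mono_at b) ->
  lt m1 d -> lt m2 d -> mem u (E W m1) -> mem v (E W m2) ->
  mem (kpair u v) (E W s).
Proof.
  intros Hds Hmono Hm1 Hm2 Hu Hv.
  assert (Hmono_d : forall b, lt b d -> E_mono_at b)
    by (intros b Hb; exact (Hmono b (wlt_trans W _ _ _ Hb (proj1 Hds)))).
  destruct (mem_E_common m1 m2 u v (Hmono_d m1 Hm1) (Hmono_d m2 Hm2) Hu Hv)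
    as [m [Hm [Hum Hvm]]].
  assert (Hmd : lt m d) by (destruct Hm as [-> | ->]; assumption).
  destruct (exists_succ_le m d Hmd) as [s' [Hms' Hs'd]].
  assert (Hup : forall z, mem z (Def (E W m)) -> mem z (E W d)).
  { intros z Hz. apply (mem_E_le d s'); [apply Hmono, Hds | exact Hs'd |].
    exact (mem_E_succ_of_Def m s' z Hms' Hz). }
  apply (mem_E_succ_of_Def d); [exact Hds|].
  apply upairV_mem_Def; apply Hup; [apply upairV_mem_Def | apply singV_mem_Def];
    assumption.
Qed.

Lemma E_lowers_step g :
  (forall b, lt b g -> E_lowers_at b /\ E_mono_at b) -> E_lowers_at g.
Proof.
  intros IH x y Hy Hx.
  destruct (mem_E_cases g y Hy)
    as [[b [Hb Hyb]] | [[b [Hb Hyb]] | [[b [d [Hb [Hd Hyd]]]] | Hy0]]].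
  - destruct (proj1 (IH b Hb) x y Hyb Hx) as [h [Hh Hxh]].
    exists h. split; [eapply wlt_trans; eauto | exact Hxh].
  - exists b. split; [apply Hb | eapply mem_of_mem_Def; eauto].
  - exists b. split; [apply Hb|].
    assert (Hdg : lt d g) by (eapply wlt_trans; [apply Hd | apply Hb]).
    destruct (mem_FunSet_kpair _ _ _ Hyd Hx) as [i [j [p [q Hxk]]]].
    eapply mem_Veq_l; [apply Veq_sym, Hxk|].
    destruct (proj1 (IH d Hdg) _ _ (mem_elt _ i) (mem_elt _ p)) as [m1 [Hm1 Hu]].
    destruct (proj1 (IH d Hdg) _ _ (mem_elt _ j) (mem_elt _ q)) as [m2 [Hm2 Hv]].
    apply (kpair_mem_E_succ d b _ _ m1 m2 Hd); try assumption.
    intros c Hc. exact (proj2 (IH c (wlt_trans W _ _ _ Hc (proj1 Hb)))).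
  - exfalso. destruct (mem_Veq_r _ _ _ Hy0 Hx) as [[] _].
Qed.

Lemma E_lowers_mono g : E_lowers_at g /\ E_mono_at g.
Proof.
  induction g as [g IH] using (well_founded_ind (wlt_wf W)).
  split; [apply E_lowers_step | apply E_mono_step]; exact IH.
Qed.

End Hierarchy.

Theorem lemma4p2 (W : WO) (alpha beta : W) (Hs : IsSucc W alpha beta)
  (x y : V) :
  mem y (E W beta) -> mem x y -> mem x (E W alpha).
Proof.
  intros Hy Hx.
  destruct (proj1 (E_lowers_mono W beta) x y Hy Hx) as [h [Hh Hxh]].
  exact (mem_E_le W alpha h x (proj2 (E_lowers_mono W alpha))
           (le_of_lt_succ W _ _ _ Hs Hh) Hxh).
Qed.
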